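(* For every regular language $L\subseteq\Sigma^*$, the nondeterministic syntactic complexity $\mathrm{nsyn}(L)$ equals the least number of states of any subatomic nfa accepting $L$.
   Context: $\mathrm{LQ}(L)$ is the finite semilattice (under $\subseteq$) of all finite unions, including $\emptyset$, of left derivatives $u^{-1}L=\{w:uw\in L\}$. The syntactic monoid $\mathrm{Syn}(L)$ is $\Sigma^*$ modulo $v\equiv_L w\iff\forall x,y\,(xvy\in L\Leftrightarrow xwy\in L)$, with classes $[w]_L$. For a finite semilattice $S$, $\mathbf{JSL}(S,S)$ is the monoid of join-preserving maps $S\to S$ with $f\cdot g:=g\circ f$. A boolean representation of a monoid $M$ is a finite semilattice $S$ with a monoid morphism $\rho\colon M\to\mathbf{JSL}(S,S)$; its degree is $|J(S)|$, the number of join-irreducible elements of $S$. $\rho_2$ extends $\rho_1$ if there is an injective join-preserving $f\colon S_1\to S_2$ with $f(\rho_1(m)(s))=\rho_2(m)(f(s))$ for all $m\in M$, $s\in S_1$. The canonical representation is $\kappa_L\colon\mathrm{Syn}(L)\to\mathbf{JSL}(\mathrm{LQ}(L),\mathrm{LQ}(L))$, $[w]_L\mapsto(K\mapsto w^{-1}K)$. $\mathrm{nsyn}(L)$ is the least degree of a boolean representation of $\mathrm{Syn}(L)$ extending $\kappa_L$. An nfa (finite states, transition relations, sets of initial and final states) accepting $L$ is subatomic if every state accepts a language in the boolean subalgebra of $\mathcal{P}(\Sigma^* )$ generated by all two-sided derivatives $u^{-1}Lv^{-1}=\{w:uwv\in L\}$. *)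

From mathcomp Require Import all_boot.
Set Warnings "-notation-overridden".
Set Implicit Arguments. Unset Strict Implicit. Unset Printing Implicit Defensive.

Section Lang.
Variable Sigma : finType.

Definition word := seq Sigma.
Definition lang := word -> bool.

Fixpoint dfa_run (Q : finType) (delta : Sigma -> Q -> Q) (q : Q) (w : word) : Q :=
  if w is a :: w' then dfa_run delta (delta a q) w' else q.

Definition regular (L : lang) : Prop :=
  exists (Q : finType) (delta : Sigma -> Q -> Q) (q0 : Q) (F : pred Q),
    forall w, L w = F (dfa_run delta q0 w).

Definition lderiv (u : word) (K : lang) : lang := fun w => K (u ++ w).
Definition deriv2 (u v : word) (K : lang) : lang := fun w => K (u ++ w ++ v).

(** Membership in LQ(L): finite unions (incl. the empty one) of left derivatives. *)
Definition inLQ (L : lang) (K : lang) : Prop :=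
  exists us : seq word, forall w, K w = has (fun u => lderiv u L w) us.

Definition lunion (K K' : lang) : lang := fun w => K w || K' w.
Definition lempty : lang := fun _ => false.

Definition syn_eq (L : lang) (v w : word) : Prop :=
  forall x y, L (x ++ v ++ y) = L (x ++ w ++ y).

Inductive in_bool_alg (G : lang -> Prop) : lang -> Prop :=
| ba_gen K : G K -> in_bool_alg G K
| ba_empty : in_bool_alg G lempty
| ba_compl K : in_bool_alg G K -> in_bool_alg G (fun w => ~~ K w)
| ba_union K K' : in_bool_alg G K -> in_bool_alg G K' -> in_bool_alg G (lunion K K')
| ba_ext K K' : in_bool_alg G K -> (forall w, K w = K' w) -> in_bool_alg G K'.

Definition two_sided_derivs (L : lang) (K : lang) : Prop :=
  exists u v, forall w, K w = deriv2 u v L w.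

Record nfa := Nfa {
  nstate : finType;
  ndelta : Sigma -> nstate -> nstate -> bool;
  ninit : pred nstate;
  nfinal : pred nstate }.

Fixpoint nfa_acc (A : nfa) (q : nstate A) (w : word) : bool :=
  if w is a :: w' then [exists q', ndelta a q q' && @nfa_acc A q' w'] else nfinal q.

Definition nfa_accepts (A : nfa) (L : lang) : Prop :=
  forall w, L w = [exists q, ninit q && @nfa_acc A q w].

Definition subatomic (A : nfa) (L : lang) : Prop :=
  forall q : nstate A, in_bool_alg (two_sided_derivs L) (@nfa_acc A q).

End Lang.

Record jsl := JSL {
  jcar :> finType;
  jjoin : jcar -> jcar -> jcar;
  jbot : jcar;
  _ : associative jjoin;
  _ : commutative jjoin;
  _ : idempotent_op jjoin;
  _ : left_id jbot jjoin }.

Definition join_pres (S T : jsl) (f : S -> T) : Prop :=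
  f (jbot S) = jbot T /\ forall x y, f (jjoin x y) = jjoin (f x) (f y).

Definition join_irr (S : jsl) (x : S) : bool :=
  (x != jbot S) && [forall y : S, forall z : S, (x == jjoin y z) ==> (x == y) || (x == z)].

Definition degree (S : jsl) : nat := #|[pred x : S | join_irr x]|.

(** A boolean representation of Syn(L) of degree n extending kappa_L.
    A monoid morphism rho : Syn(L) -> JSL(S,S) (with f.g := g o f) is encoded as
    a map on words that is a monoid morphism Sigma^* -> JSL(S,S) and is constant on
    syntactic classes (universal property of the quotient monoid Sigma^*/==_L). *)
Definition nsyn_degree (Sigma : finType) (L : lang Sigma) (n : nat) : Prop :=
  exists (S : jsl) (rho : word Sigma -> S -> S),
    [/\ forall w, join_pres (rho w),
        (forall s, rho [::] s = s) /\
        forall v w s, rho (v ++ w) s = rho w (rho v s),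
        forall v w, syn_eq L v w -> forall s, rho v s = rho w s,
        (exists f : lang Sigma -> S,
           [/\ f (@lempty Sigma) = jbot S,
               forall K K', inLQ L K -> inLQ L K' -> f (lunion K K') = jjoin (f K) (f K'),
               forall K K', inLQ L K -> inLQ L K' -> f K = f K' -> forall w, K w = K' w &
               forall w K, inLQ L K -> f (lderiv w K) = rho w (f K)])
      & degree S = n].

Definition subatomic_size (Sigma : finType) (L : lang Sigma) (n : nat) : Prop :=
  exists A : nfa Sigma, [/\ nfa_accepts A L, subatomic A L & #|nstate A| = n].

Definition least (P : nat -> Prop) (n : nat) : Prop := P n /\ forall m, P m -> n <= m.

From mathcomp Require Import all_boot.
From Stdlib Require Import ClassicalEpsilon FunctionalExtensionality.
Set Implicit Arguments. Unset Strict Implicit. Unset Printing Implicit Defensive.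

(** Both quantities are least elements of nonempty sets of naturals, so it
    suffices to turn each object of one kind into one of the other kind
    without increasing the size.
    - A subatomic nfa with n states yields a representation of degree <= n:
      Syn(L) acts by left derivatives on the finite semilattice of unions of
      state languages, whose join-irreducibles are among the state languages.
      Subatomicity makes the action syntactic: languages in the boolean
      algebra generated by two-sided derivatives are unions of syntactic
      classes ([ba_syn_saturated]).
    - A representation of degree n yields a subatomic nfa with n states: its
      states are the join-irreducibles, transitions and acceptance are read
      off the action, and the state languages are unions of syntactic classes,
      hence (L being regular) lie in that boolean algebra
      ([syn_saturated_ba]).
    A subatomic nfa exists since the reachable part of a dfa is one. *)

(** Classical decision of a proposition, used to form finite subtypes and
    sets whose defining property is not computable. *)
Definition pdec (P : Prop) : bool := if excluded_middle_informative P then true else false.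

Lemma pdecP (P : Prop) : reflect P (pdec P).
Proof. by rewrite /pdec; case: excluded_middle_informative => H; constructor. Qed.

Lemma finite_choice (I X : eqType) (P : I -> X -> Prop) (s : seq I) :
  exists xs : seq X, forall i, i \in s -> (exists x, P i x) -> exists2 x, x \in xs & P i x.
Proof.
elim: s => [|i s [xs IH]]; first by exists [::].
have [[x Px]|noP] := classic (exists x, P i x).
- exists (x :: xs) => j; rewrite inE => /predU1P [-> _|js /(IH j js) [y yin Py]].
    by exists x; rewrite ?mem_head.
  by exists y; rewrite ?inE ?yin ?orbT.
- by exists xs => j; rewrite inE => /predU1P [-> /noP|js]; last exact: IH.
Qed.

Section BooleanAlgebra.
Variable Sigma : finType.
Variable G : lang Sigma -> Prop.

Lemma ba_has (T : Type) (s : seq T) (P : T -> lang Sigma) :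
  (forall t, in_bool_alg G (P t)) -> in_bool_alg G (fun w => has (fun t => P t w) s).
Proof.
move=> HP; elim: s => [|t s IH] /=; first by apply: ba_ext; first exact: ba_empty.
by apply: ba_ext; first exact: (ba_union (HP t) IH).
Qed.

Lemma ba_all (T : Type) (s : seq T) (P : T -> lang Sigma) :
  (forall t, in_bool_alg G (P t)) -> in_bool_alg G (fun w => all (fun t => P t w) s).
Proof.
move=> HP; apply: ba_ext.
  by apply/ba_compl/(@ba_has _ s (fun t w => ~~ P t w)) => t; apply: ba_compl.
by move=> w /=; rewrite -all_predC; apply: eq_all => t /=; rewrite negbK.
Qed.

Variables (I : finType) (Gf : I -> lang Sigma).
Hypothesis Gf_alg : forall i, in_bool_alg G (Gf i).

Definition signature (w : word Sigma) : {ffun I -> bool} := [ffun i => Gf i w].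

(** Each fibre of the signature is a finite intersection of members of the
    family or of their complements. *)
Lemma ba_signature_fibre (b : {ffun I -> bool}) :
  in_bool_alg G (fun w => signature w == b).
Proof.
apply: ba_ext.
  apply: (@ba_all _ (enum I) (fun i w => Gf i w == b i)) => i.
  case: (b i); first by apply: ba_ext (Gf_alg i) _ => w; rewrite eqb_id.
  by apply: ba_ext (ba_compl (Gf_alg i)) _ => w; rewrite eqbF_neg.
move=> w /=; apply/allP/eqP => [Hw|<- i _]; last by rewrite ffunE.
by apply/ffunP => i; rewrite ffunE; apply/eqP/Hw; rewrite mem_enum.
Qed.

Lemma ba_signature_saturated (K : lang Sigma) :
  (forall v w, signature v = signature w -> K v = K w) -> in_bool_alg G K.
Proof.
move=> HK; pose P b := pdec (exists w, K w /\ signature w = b).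
apply: ba_ext.
  by apply: (@ba_has _ [seq b <- enum {ffun I -> bool} | P b]) => b;
    apply: ba_signature_fibre.
move=> v /=; apply/hasP/idP => [[b]|Kv].
  by rewrite mem_filter => /andP [/pdecP [w [Kw <-]] _] /eqP /HK ->.
by exists (signature v); rewrite ?eqxx // mem_filter mem_enum andbT; apply/pdecP; exists v.
Qed.
End BooleanAlgebra.

Section Syntactic.
Variable Sigma : finType.
Variable L : lang Sigma.

Lemma dfa_run_cat (Q : finType) (d : Sigma -> Q -> Q) q x y :
  dfa_run d q (x ++ y) = dfa_run d (dfa_run d q x) y.
Proof. by elim: x q => [|a x IH] q //=. Qed.

Lemma syn_eq_catr u v w : syn_eq L v w -> syn_eq L (v ++ u) (w ++ u).
Proof. by move=> H x y; rewrite -!catA; apply: H. Qed.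

Lemma ba_syn_saturated K : in_bool_alg (two_sided_derivs L) K ->
  forall v w, syn_eq L v w -> K v = K w.
Proof.
elim=> {K} [K [x [y HK]]| |K _ IH|K K' _ IH _ IH'|K K' _ IH HK] v w Hvw //=.
- by rewrite !HK; apply: Hvw.
- by rewrite (IH v w Hvw).
- by rewrite /lunion (IH v w Hvw) (IH' v w Hvw).
- by rewrite -!HK (IH v w Hvw).
Qed.

(** Conversely, when [L] is regular, every union of syntactic classes lies in
    that algebra: the two-sided derivative [x^-1 L y^-1] only depends on the
    state reached by [x] and on the set of states from which [y] leads to
    acceptance, so finitely many derivatives already separate the syntactic
    classes. *)
Lemma syn_saturated_ba K : regular L ->
  (forall v w, syn_eq L v w -> K v = K w) -> in_bool_alg (two_sided_derivs L) K.
Proof.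
move=> [Q [d [q0 [F hL]]]] HK.
pose key x y := (dfa_run d q0 x, [set q | F (dfa_run d q y)]).
pose I := {r : Q * {set Q} | pdec (exists x y, key x y = r)}.
pose Gk (r : Q * {set Q}) v := dfa_run d r.1 v \in r.2.
have Gk_key x y v : Gk (key x y) v = L (x ++ v ++ y).
  by rewrite /Gk inE hL catA !dfa_run_cat.
have Gk_alg (r : I) : in_bool_alg (two_sided_derivs L) (Gk (val r)).
  have /pdecP [x [y <-]] := valP r.
  by apply: ba_gen; exists x, y => v; rewrite Gk_key.
apply: (ba_signature_saturated Gk_alg) => v w Hsig; apply: HK => x y.
have kxy : pdec (exists x' y', key x' y' = key x y) by apply/pdecP; exists x, y.
move/ffunP: Hsig => /(_ (Sub (key x y) kxy)).
by rewrite !ffunE /= !Gk_key.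
Qed.

Lemma LQ_L : inLQ L L.
Proof. by exists [:: [::]] => w /=; rewrite /lderiv orbF. Qed.

Lemma LQ_lderiv w K : inLQ L K -> inLQ L (lderiv w K).
Proof.
move=> [us Hus]; exists [seq u ++ w | u <- us] => v.
by rewrite /lderiv Hus has_map; apply: eq_has => u; rewrite /= /lderiv catA.
Qed.

Lemma LQ_union K K' : inLQ L K -> inLQ L K' -> inLQ L (lunion K K').
Proof. by move=> [us H] [us' H']; exists (us ++ us') => w; rewrite has_cat /lunion H H'. Qed.

(** A regular language has finitely many left derivatives: one word per
    reachable state of a dfa represents all of them. *)
Lemma finite_lderivs : regular L ->
  exists us : seq (word Sigma), forall u,
    exists2 u', u' \in us & forall w, L (u' ++ w) = L (u ++ w).
Proof.
move=> [Q [d [q0 [F hL]]]].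
have [us Hus] := finite_choice (fun q u => dfa_run d q0 u = q) (enum Q).
exists us => u; have [|u' u'in Hu'] := Hus _ (mem_enum _ (dfa_run d q0 u)); first by exists u.
by exists u' => // w; rewrite !hL !dfa_run_cat Hu'.
Qed.

(** Hence LQ(L) has a largest member [K0] not containing the empty word; it
    yields the acceptance condition of the nfa built from a representation. *)
Lemma LQ_max_eps_free : regular L ->
  exists K0, [/\ inLQ L K0, K0 [::] = false &
                 forall K, inLQ L K -> K [::] = false -> forall w, K w -> K0 w].
Proof.
move=> /finite_lderivs [us Hus]; pose us0 := [seq u <- us | ~~ L u].
exists (fun w => has (fun u => lderiv u L w) us0); split; first by exists us0.
  by apply/hasP => -[u]; rewrite mem_filter /lderiv cats0 => /andP [/negPf ->].
move=> K [vs HK] Keps w; rewrite HK => /hasP [v vin Lvw].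
have [u uin Huv] := Hus v; apply/hasP; exists u; last by rewrite /lderiv Huv.
rewrite mem_filter uin andbT -[u]cats0 Huv cats0.
by move: Keps; rewrite HK => /hasPn /(_ v vin); rewrite /lderiv cats0.
Qed.
End Syntactic.

Section JoinSemilattice.
Variable S : jsl.

Lemma joinA : associative (@jjoin S). Proof. by case: S. Qed.
Lemma joinC : commutative (@jjoin S). Proof. by case: S. Qed.
Lemma joinxx : idempotent_op (@jjoin S). Proof. by case: S. Qed.
Lemma join0x : left_id (jbot S) (@jjoin S). Proof. by case: S. Qed.

Definition jle (x y : S) : bool := jjoin x y == y.

Lemma jle_refl x : jle x x. Proof. by rewrite /jle joinxx. Qed.

Lemma jle_trans x y z : jle x y -> jle y z -> jle x z.
Proof. by rewrite /jle => /eqP Hxy /eqP Hyz; rewrite -Hyz joinA Hxy. Qed.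

Lemma jle_anti x y : jle x y -> jle y x -> x = y.
Proof. by rewrite /jle => /eqP Hxy /eqP Hyx; rewrite -Hxy -{1}Hyx joinC. Qed.

Lemma jle_bot x : jle (jbot S) x. Proof. by rewrite /jle join0x. Qed.

Lemma jle_joinl x y : jle x (jjoin x y). Proof. by rewrite /jle joinA joinxx. Qed.

Lemma jle_joinr x y : jle y (jjoin x y). Proof. by rewrite joinC jle_joinl. Qed.

Lemma jle_join x y z : jle (jjoin x y) z = jle x z && jle y z.
Proof.
apply/idP/andP => [H|[/eqP Hx /eqP Hy]].
  by split; apply: jle_trans H; [apply: jle_joinl | apply: jle_joinr].
by rewrite /jle -joinA Hy Hx.
Qed.

(** The down-set of an element; it strictly shrinks along the order, which
    makes its size a measure for well-founded induction. *)
Definition below (s : S) : pred S := [pred u | jle u s].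

Lemma card_below_lt u s : jle u s -> u != s -> #|below u| < #|below s|.
Proof.
move=> us nus; apply/proper_card/properP; split.
  by apply/subsetP => v; rewrite !inE => /jle_trans; apply.
exists s; rewrite !inE ?jle_refl //; apply: contra nus => su.
by rewrite (jle_anti us su).
Qed.

(** A join-preserving predicate holds at [s] iff it holds at some
    join-irreducible element below [s]; in a finite semilattice every element
    is the join of the join-irreducibles below it. *)
Section JoinPredicate.
Variable phi : pred S.
Hypothesis phi_bot : phi (jbot S) = false.
Hypothesis phi_join : forall x y, phi (jjoin x y) = phi x || phi y.

Lemma phi_mono x y : jle x y -> phi x -> phi y.
Proof. by rewrite /jle => /eqP <- Px; rewrite phi_join Px. Qed.

Lemma join_pred_irr s : phi s = [exists j, [&& join_irr j, jle j s & phi j]].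
Proof.
apply/idP/existsP => [|[j /and3P [_ js Pj]]]; last exact: phi_mono js Pj.
have [n] := ubnP #|below s|; elim: n s => // n IH s /ltnSE le_sn Ps.
have [Es|nbot] := eqVneq s (jbot S); first by rewrite Es phi_bot in Ps.
have [Js|nJs] := boolP (join_irr s); first by exists s; rewrite Js jle_refl.
have [y [z [Es ny nz]]] : exists y z, [/\ s = jjoin y z, s != y & s != z].
  move: nJs; rewrite /join_irr nbot => /forallPn [y /forallPn [z]].
  by rewrite negb_imply negb_or => /andP [/eqP Es /andP [ny nz]]; exists y, z.
have [t [ts nts Pt]] : exists t, [/\ jle t s, t != s & phi t].
  have [ys zs] : jle y s /\ jle z s by rewrite Es jle_joinl jle_joinr.
  have : phi y || phi z by rewrite -phi_join -Es.
  by case/orP => [Py|Pz]; [exists y | exists z]; split; rewrite // eq_sym.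
have [j /and3P [Jj jt Pj]] := IH t (leq_trans (card_below_lt ts nts) le_sn) Pt.
by exists j; rewrite Jj Pj (jle_trans jt ts).
Qed.
End JoinPredicate.

Lemma join_irr_foldr (x : S) (s : seq S) :
  join_irr x -> x = foldr (@jjoin S) (jbot S) s -> x \in s.
Proof.
move=> /andP [nbot /forallP Jx]; elim: s => [|y s IH] /= Ex; first by rewrite Ex eqxx in nbot.
move: (Jx y) => /forallP /(_ (foldr (@jjoin S) (jbot S) s)).
by rewrite {1}Ex eqxx inE => /orP [->|/eqP /IH ->]; rewrite ?orbT.
Qed.
End JoinSemilattice.

(** From a boolean representation to a subatomic nfa: the states are the
    join-irreducibles of the semilattice, a state [j] moves under [a] to the
    join-irreducibles below [rho a j], and the state language of [j] is the
    set of words [w] with [rho w j] not below the image of [K0]. *)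
Section RepresentationToNfa.
Variables (Sigma : finType) (L : lang Sigma).
Variables (S : jsl) (rho : word Sigma -> S -> S) (f : lang Sigma -> S).
Hypothesis rho_join : forall w, join_pres (rho w).
Hypothesis rho_nil : forall s, rho [::] s = s.
Hypothesis rho_cat : forall v w s, rho (v ++ w) s = rho w (rho v s).
Hypothesis rho_syn : forall v w, syn_eq L v w -> forall s, rho v s = rho w s.
Hypothesis f_union :
  forall K K', inLQ L K -> inLQ L K' -> f (lunion K K') = jjoin (f K) (f K').
Hypothesis f_inj :
  forall K K', inLQ L K -> inLQ L K' -> f K = f K' -> forall w, K w = K' w.
Hypothesis f_lderiv : forall w K, inLQ L K -> f (lderiv w K) = rho w (f K).
Variable K0 : lang Sigma.
Hypothesis K0_LQ : inLQ L K0.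
Hypothesis K0_eps : K0 [::] = false.
Hypothesis K0_max : forall K, inLQ L K -> K [::] = false -> forall w, K w -> K0 w.

(** An element is accepting when it is not below [f K0]; on the image of
    LQ(L) this detects the empty word. *)
Definition accepting (s : S) : bool := ~~ jle s (f K0).

Lemma accepting_bot : accepting (jbot S) = false.
Proof. by rewrite /accepting jle_bot. Qed.

Lemma accepting_join x y : accepting (jjoin x y) = accepting x || accepting y.
Proof. by rewrite /accepting jle_join negb_and. Qed.

Lemma accepting_f K : inLQ L K -> accepting (f K) = K [::].
Proof.
move=> HK; rewrite /accepting /jle -f_union //; case Keps: (K [::]).
  apply/negP => /eqP E; have := f_inj (LQ_union HK K0_LQ) K0_LQ E [::].
  by rewrite /lunion Keps K0_eps.
suff -> : lunion K K0 = K0 by rewrite eqxx.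
apply: functional_extensionality => w; rewrite /lunion.
by case Kw: (K w) => //=; rewrite (K0_max HK Keps Kw).
Qed.

Definition rep_lang (s : S) : lang Sigma := fun w => accepting (rho w s).

Lemma rep_lang_bot w : rep_lang (jbot S) w = false.
Proof. by rewrite /rep_lang (proj1 (rho_join w)) accepting_bot. Qed.

Lemma rep_lang_join x y w : rep_lang (jjoin x y) w = rep_lang x w || rep_lang y w.
Proof. by rewrite /rep_lang (proj2 (rho_join w)) accepting_join. Qed.

Lemma rep_lang_f K w : inLQ L K -> rep_lang (f K) w = K w.
Proof.
move=> HK; rewrite /rep_lang -f_lderiv // accepting_f; last exact: LQ_lderiv.
by rewrite /lderiv cats0.
Qed.

Definition rep_nfa : nfa Sigma :=
  @Nfa Sigma {x : S | join_irr x}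
    (fun a j j' => jle (val j') (rho [:: a] (val j)))
    (fun j => jle (val j) (f L))
    (fun j => accepting (val j)).

(** Decomposing a join-preserving predicate over the join-irreducibles below
    an element is exactly one nondeterministic step. *)
Lemma rep_lang_irr s w :
  rep_lang s w = [exists j : nstate rep_nfa, jle (val j) s && rep_lang (val j) w].
Proof.
rewrite (join_pred_irr (rep_lang_bot w) (fun x y => rep_lang_join x y w)).
apply/existsP/existsP => [[j /and3P [Jj js Pj]]|[j /andP [js Pj]]].
  by exists (Sub j Jj); rewrite js.
by exists (val j); rewrite (valP j) js.
Qed.

Lemma rep_nfa_acc (j : nstate rep_nfa) w : nfa_acc j w = rep_lang (val j) w.
Proof.
elim: w j => [|a w IH] j /=; first by rewrite /rep_lang rho_nil.
have -> : rep_lang (val j) (a :: w) = rep_lang (rho [:: a] (val j)) w.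
  by rewrite /rep_lang -cat1s rho_cat.
by rewrite rep_lang_irr; apply: eq_existsb => j'; rewrite IH.
Qed.

Lemma rep_nfa_accepts : nfa_accepts rep_nfa L.
Proof.
move=> w; rewrite -(rep_lang_f w (LQ_L L)) rep_lang_irr.
by apply: eq_existsb => j; rewrite rep_nfa_acc.
Qed.

Lemma rep_nfa_subatomic : regular L -> subatomic rep_nfa L.
Proof.
move=> regL j; apply: (@ba_ext _ _ (rep_lang (val j))) => [|w]; last by rewrite rep_nfa_acc.
by apply: syn_saturated_ba regL _ => v w Hvw; rewrite /rep_lang (rho_syn Hvw).
Qed.

Lemma rep_nfa_card : #|nstate rep_nfa| = degree S.
Proof. by rewrite card_sig. Qed.
End RepresentationToNfa.

Lemma nsyn_subatomic (Sigma : finType) (L : lang Sigma) n :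
  regular L -> nsyn_degree L n -> subatomic_size L n.
Proof.
move=> regL [S [rho [rho_join [rho_nil rho_cat] rho_syn [f [_ fU fI fD]] <-]]].
have [K0 [K0_LQ K0_eps K0_max]] := LQ_max_eps_free regL.
exists (rep_nfa L rho f K0); split.
- exact: (rep_nfa_accepts rho_join rho_nil rho_cat fU fI fD K0_LQ K0_eps K0_max).
- exact: (rep_nfa_subatomic rho_join rho_nil rho_cat rho_syn regL).
- exact: rep_nfa_card.
Qed.

(** The semilattice of all unions of a finite family [G] of languages.  It is
    represented by the sets of indices closed under [gens_below], the largest
    set of indices whose languages lie below a given language; its
    join-irreducibles are among the generators, so its degree is at most the
    size of the family. *)
Section UnionSemilattice.
Variables (Sigma : finType) (Q : finType) (G : Q -> lang Sigma).

Definition union_of (X : {set Q}) : lang Sigma := fun w => [exists q in X, G q w].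

Definition gens_below (K : lang Sigma) : {set Q} :=
  [set q | pdec (forall w, G q w -> K w)].

Definition is_union (K : lang Sigma) : Prop :=
  exists X : {set Q}, forall w, K w = union_of X w.

Lemma union_gens_below K w : union_of (gens_below K) w -> K w.
Proof. by move=> /existsP [q /andP []]; rewrite inE => /pdecP; apply. Qed.

Lemma gens_below_union (X : {set Q}) : X \subset gens_below (union_of X).
Proof.
apply/subsetP => q qX; rewrite inE; apply/pdecP => w Gqw.
by apply/existsP; exists q; rewrite qX.
Qed.

Lemma gens_below_ext K K' : (forall w, K w = K' w) -> gens_below K = gens_below K'.
Proof.
move=> E; apply/setP => q; rewrite !inE.
by apply/pdecP/pdecP => H w /H; rewrite E.
Qed.

Lemma gens_below_idem K : gens_below (union_of (gens_below K)) = gens_below K.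
Proof.
apply/eqP; rewrite eqEsubset gens_below_union andbT; apply/subsetP => q.
by rewrite !inE => /pdecP H; apply/pdecP => w /H /union_gens_below.
Qed.

Lemma union_gens_below_union (X : {set Q}) w :
  union_of (gens_below (union_of X)) w = union_of X w.
Proof.
apply/idP/idP => [|/existsP [q /andP [qX Gqw]]]; first exact: union_gens_below.
by apply/existsP; exists q; rewrite Gqw (subsetP (gens_below_union X)).
Qed.

Lemma is_union_ext K K' : (forall w, K w = K' w) -> is_union K -> is_union K'.
Proof. by move=> E [X HX]; exists X => w; rewrite -E. Qed.

Lemma is_union_empty : is_union (@lempty Sigma).
Proof. by exists set0 => w; apply/esym/existsP => -[q]; rewrite inE. Qed.

Lemma is_union_union K K' : is_union K -> is_union K' -> is_union (lunion K K').
Proof.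
move=> [X HX] [Y HY]; exists (X :|: Y) => w; rewrite /lunion HX HY.
apply/orP/existsP => [[]/existsP [q /andP [qX Gqw]]|[q /andP []]].
- by exists q; rewrite inE qX Gqw.
- by exists q; rewrite inE qX orbT Gqw.
by rewrite inE => /orP [] qX Gqw; [left|right]; apply/existsP; exists q; rewrite qX.
Qed.

Lemma is_union_has (T : Type) (s : seq T) (P : T -> lang Sigma) :
  (forall t, is_union (P t)) -> is_union (fun w => has (fun t => P t w) s).
Proof.
move=> HP; elim: s => [|t s IH]; first exact: is_union_ext is_union_empty.
exact: is_union_ext (is_union_union (HP t) IH).
Qed.

Definition closed_set := {X : {set Q} | gens_below (union_of X) == X}.

Definition closure (K : lang Sigma) : closed_set :=
  exist _ (gens_below K) (introT eqP (gens_below_idem K)).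

Definition clang (e : closed_set) : lang Sigma := union_of (val e).

Lemma clang_inj e e' : (forall w, clang e w = clang e' w) -> e = e'.
Proof.
move=> E; apply: val_inj.
by rewrite -(eqP (valP e)) -(eqP (valP e')) (gens_below_ext E).
Qed.

Lemma clang_closure K w : is_union K -> clang (closure K) w = K w.
Proof.
by move=> [X HX]; rewrite /clang /= (gens_below_ext HX) union_gens_below_union HX.
Qed.

Lemma is_union_clang e : is_union (clang e).
Proof. by exists (val e). Qed.

Definition cjoin (e e' : closed_set) : closed_set := closure (lunion (clang e) (clang e')).

Definition cbot : closed_set := closure (@lempty Sigma).

Lemma clang_join e e' w : clang (cjoin e e') w = clang e w || clang e' w.
Proof. by rewrite clang_closure //; apply/is_union_union/is_union_clang/is_union_clang. Qed.

Lemma clang_bot w : clang cbot w = false.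
Proof. by rewrite clang_closure //; apply: is_union_empty. Qed.

Lemma cjoinA : associative cjoin.
Proof. by move=> x y z; apply: clang_inj => w; rewrite !clang_join orbA. Qed.

Lemma cjoinC : commutative cjoin.
Proof. by move=> x y; apply: clang_inj => w; rewrite !clang_join orbC. Qed.

Lemma cjoinxx : idempotent_op cjoin.
Proof. by move=> x; apply: clang_inj => w; rewrite !clang_join orbb. Qed.

Lemma cjoin0x : left_id cbot cjoin.
Proof. by move=> x; apply: clang_inj => w; rewrite !clang_join clang_bot. Qed.

Definition union_jsl : jsl := @JSL closed_set cjoin cbot cjoinA cjoinC cjoinxx cjoin0x.

(** Each element is the join of the generators it contains, so a
    join-irreducible element is the closure of a single generator. *)
Lemma union_jsl_degree : degree union_jsl <= #|Q|.
Proof.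
pose g q : union_jsl := closure (G q).
have clang_g q w : clang (g q) w = G q w.
  rewrite clang_closure //; exists [set q] => v.
  apply/idP/existsP => [Gqv|[q' /andP []]]; first by exists q; rewrite inE eqxx.
  by rewrite inE => /eqP ->.
rewrite /degree -(size_codom g) (leq_trans _ (card_size _)) //.
apply/subset_leq_card/subsetP => e; rewrite inE => Je.
have /mapP [q _ ->] : e \in map g (enum (val e)); last exact: codom_f.
apply: join_irr_foldr Je _; apply: clang_inj => w.
have -> : clang (foldr (@jjoin union_jsl) (jbot union_jsl) (map g (enum (val e)))) w
          = has (fun q => G q w) (enum (val e)).
  by elim: (enum (val e)) => [|q s IH] /=; rewrite ?clang_bot // clang_join IH clang_g.
apply/existsP/hasP => [[q /andP [qe Gqw]]|[q]]; first by exists q; rewrite ?mem_enum.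
by rewrite mem_enum => qe Gqw; exists q; rewrite qe.
Qed.
End UnionSemilattice.

(** From a subatomic nfa to a boolean representation: Syn(L) acts by left
    derivatives on the semilattice of unions of state languages.  The action
    is well defined because left derivatives of unions of state languages are
    again such unions (via the subset construction), and it factors through
    the syntactic monoid because subatomic state languages are unions of
    syntactic classes. *)
Section NfaToRepresentation.
Variables (Sigma : finType) (L : lang Sigma) (A : nfa Sigma).
Hypothesis A_accepts : nfa_accepts A L.
Hypothesis A_subatomic : subatomic A L.

Local Notation Q := (nstate A).
Local Notation nacc := (@nfa_acc Sigma A).
Local Notation U := (union_of nacc).

Definition step (X : {set Q}) (a : Sigma) : {set Q} :=
  [set q' | [exists q in X, ndelta a q q']].

Definition post (X : {set Q}) (u : word Sigma) : {set Q} := foldl step X u.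

Lemma union_step X a v : U (step X a) v = U X (a :: v).
Proof.
apply/existsP/existsP => [[q' /andP []]|[q /andP [qX /existsP [q' /andP [dq Hq']]]]].
  rewrite inE => /existsP [q /andP [qX dq]] Hq'.
  by exists q; rewrite qX; apply/existsP; exists q'; rewrite dq.
exists q'; apply/andP; split=> //.
by rewrite inE; apply/existsP; exists q; rewrite qX.
Qed.

Lemma union_post X u v : U (post X u) v = U X (u ++ v).
Proof. by elim: u X => [|a u IH] X //=; rewrite IH union_step. Qed.

Lemma is_union_lderiv u K : is_union nacc K -> is_union nacc (lderiv u K).
Proof. by move=> [X HX]; exists (post X u) => w; rewrite union_post /lderiv HX. Qed.

Lemma is_union_LQ K : inLQ L K -> is_union nacc K.
Proof.
have HL : is_union nacc L.
  exists [set q | ninit q] => w; rewrite A_accepts.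
  by apply: eq_existsb => q; rewrite inE.
move=> [us Hus]; apply: is_union_ext (fun w => esym (Hus w)) _.
by apply: is_union_has => u; apply: is_union_lderiv.
Qed.

Local Notation S := (union_jsl nacc).

Definition lderiv_act (w : word Sigma) (e : S) : S := closure nacc (lderiv w (clang e)).

Lemma clang_act w e v : clang (lderiv_act w e) v = clang e (w ++ v).
Proof. by rewrite clang_closure //; apply/is_union_lderiv/is_union_clang. Qed.

Lemma subatomic_nsyn : nsyn_degree L (degree S).
Proof.
exists S, lderiv_act; split=> //.
- move=> w; split; first by apply: clang_inj => v; rewrite clang_act !clang_bot.
  by move=> x y; apply: clang_inj => v; rewrite /= clang_act !clang_join !clang_act.
- split=> [s|v w s]; apply: clang_inj => u; rewrite !clang_act //.
  by rewrite catA.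
- move=> v w Hvw s; apply: clang_inj => u; rewrite !clang_act.
  apply: eq_existsb => q; congr (_ && _).
  exact: ba_syn_saturated (A_subatomic q) _ _ (syn_eq_catr u Hvw).
- exists (closure nacc); split => //.
  + move=> K K' /is_union_LQ HK /is_union_LQ HK'; apply: clang_inj => w.
    by rewrite clang_join !clang_closure //; apply: is_union_union.
  + move=> K K' /is_union_LQ HK /is_union_LQ HK' E w.
    by rewrite -(clang_closure w HK) E clang_closure.
  + move=> w K /is_union_LQ HK; apply: clang_inj => v.
    by rewrite clang_act !clang_closure //; apply: is_union_lderiv.
Qed.
End NfaToRepresentation.

Lemma subatomic_nsyn_le (Sigma : finType) (L : lang Sigma) n :
  subatomic_size L n -> exists2 m, nsyn_degree L m & m <= n.
Proof.
move=> [A [A_accepts A_subatomic <-]].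
by exists (degree (union_jsl (@nfa_acc Sigma A)));
  [apply: subatomic_nsyn | apply: union_jsl_degree].
Qed.

(** A regular language has a subatomic nfa: the reachable part of a dfa,
    whose state languages are left derivatives [u^-1 L = u^-1 L eps^-1]. *)
Lemma regular_subatomic (Sigma : finType) (L : lang Sigma) :
  regular L -> exists n, subatomic_size L n.
Proof.
move=> [Q [d [q0 [F hL]]]].
pose R := {q : Q | pdec (exists u, dfa_run d q0 u = q)}.
have reach_step (r : R) a : pdec (exists u, dfa_run d q0 u = d a (val r)).
  have /pdecP [u <-] := valP r.
  by apply/pdecP; exists (rcons u a); rewrite -cats1 dfa_run_cat.
have reach0 : pdec (exists u, dfa_run d q0 u = q0) by apply/pdecP; exists [::].
pose A := @Nfa Sigma R (fun a r r' => r' == Sub (d a (val r)) (reach_step r a))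
  (fun r => r == Sub q0 reach0) (fun r => F (val r)).
have accA (r : nstate A) w : nfa_acc r w = F (dfa_run d (val r) w).
  elim: w r => [|a w IH] r //=.
  apply/existsP/idP => [[r' /andP [/eqP -> ]]|Hw]; first by rewrite IH.
  by exists (Sub (d a (val r)) (reach_step r a)); rewrite eqxx IH.
exists #|nstate A|, A; split=> //.
- move=> w; rewrite hL; apply/idP/existsP => [Fw|[r /andP [/eqP -> ]]].
    by exists (Sub q0 reach0); rewrite /= eqxx accA.
  by rewrite accA.
- move=> r; have /pdecP [u ur] := valP r.
  by apply: ba_gen; exists u, [::] => w; rewrite accA /deriv2 cats0 hL dfa_run_cat ur.
Qed.

Lemma least_exists (P : nat -> Prop) : (exists n, P n) -> exists n, least P n.
Proof.
move=> [n Pn]; have exP : exists n, pdec (P n) by exists n; apply/pdecP.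
case: (ex_minnP exP) => m /pdecP Pm m_min; exists m; split=> // k Pk.
by apply/m_min/pdecP.
Qed.

Theorem theorem4p13 (Sigma : finType) (L : lang Sigma) :
  regular L -> exists n, least (nsyn_degree L) n /\ least (subatomic_size L) n.
Proof.
move=> regL.
have [n [sub_n n_min]] := least_exists (regular_subatomic regL).
exists n; split=> //; split=> [|m nsyn_m].
- have [m nsyn_m le_mn] := subatomic_nsyn_le sub_n.
  suff -> : n = m by [].
  by apply/eqP; rewrite eqn_leq le_mn andbT; apply/n_min/nsyn_subatomic.
- exact/n_min/nsyn_subatomic.
Qed.
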